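(* Let $t \geq 1$ be an integer and let $\mathcal{F}$ be a finite family of finite sets with $\alpha(\mathcal{F}) \geq t$, $\mathcal{F}^{t,+} \neq \emptyset$ and $\mathcal{F}^{t,-} \neq \emptyset$. Suppose $k$ is an integer with $2 \leq k < \kappa(\mathcal{F},t)$ and $\mathcal{A}_1, \dots, \mathcal{A}_k$ are cross-$t$-intersecting sub-families of $\mathcal{F}$ such that $\sum_{i=1}^k |\mathcal{A}_i|$ is maximum among all $k$-tuples of cross-$t$-intersecting sub-families of $\mathcal{F}$. Then it is neither the case that $\mathcal{A}_i = \mathcal{F}$ for some $i \in [k]$ and $\mathcal{A}_j = \emptyset$ for all $j \in [k]\setminus\{i\}$, nor the case that $\mathcal{A}_1 = \dots = \mathcal{A}_k = \mathcal{L}$ for some largest $t$-intersecting sub-family $\mathcal{L}$ of $\mathcal{F}$.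
   Context: All sets and families are finite. A family $\mathcal{A}$ is $t$-intersecting if $|A \cap B| \geq t$ for all $A, B \in \mathcal{A}$ with $A \neq B$. Families $\mathcal{A}_1, \dots, \mathcal{A}_k$ (not necessarily distinct or non-empty) are cross-$t$-intersecting if for all $i \neq j$, $|A \cap B| \geq t$ for every $A \in \mathcal{A}_i$, $B \in \mathcal{A}_j$. $\alpha(\mathcal{F}) = \max\{|F| : F \in \mathcal{F}\}$; $l(\mathcal{F},t)$ is the size of a largest $t$-intersecting sub-family of $\mathcal{F}$. For a family $\mathcal{A}$, $\mathcal{A}^{t,+} = \{A \in \mathcal{A} : |A \cap B| \geq t \text{ for all } B \in \mathcal{A}\setminus\{A\}\}$ and $\mathcal{A}^{t,-} = \mathcal{A} \setminus \mathcal{A}^{t,+}$. For $\mathcal{A} \subseteq \mathcal{F}$, $\beta(\mathcal{F},t,\mathcal{A}) = \frac{l(\mathcal{F},t) - |\mathcal{A}^{t,+}|}{|\mathcal{A}^{t,-}|}$ if $\mathcal{A}^{t,-} \neq \emptyset$, and $\frac{l(\mathcal{F},t)}{|\mathcal{F}|}$ otherwise; $\beta(\mathcal{F},t) = \min_{\mathcal{A} \subseteq \mathcal{F}} \beta(\mathcal{F},t,\mathcal{A})$ and $\kappa(\mathcal{F},t) = 1/\beta(\mathcal{F},t)$. $[k] = \{1,\dots,k\}$. *)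

From mathcomp Require Import all_boot all_order all_algebra.
Set Implicit Arguments. Unset Strict Implicit. Unset Printing Implicit Defensive.
Import Order.TTheory GRing.Theory Num.Theory.

(* Finite sets are subsets of an arbitrary finite ground type T;
   families are elements of {set {set T}}. *)
Section Defs.
Variable T : finType.

(* alpha(F) = max size of a member of F (0 if F empty) *)
Definition alpha (F : {set {set T}}) : nat := \max_(A in F) #|A|.

Definition t_intersecting (t : nat) (A : {set {set T}}) : Prop :=
  forall X Y, X \in A -> Y \in A -> X != Y -> t <= #|X :&: Y|.

Definition t_intersectingb (t : nat) (A : {set {set T}}) : bool :=
  [forall X in A, forall Y in A, (X != Y) ==> (t <= #|X :&: Y|)].

Definition cross_t_intersecting (t k : nat) (As : 'I_k -> {set {set T}}) : Prop :=
  forall i j : 'I_k, i != j ->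
    forall X Y, X \in As i -> Y \in As j -> t <= #|X :&: Y|.

Definition lsize (F : {set {set T}}) (t : nat) : nat :=
  \max_(L in powerset F | t_intersectingb t L) #|L|.

Definition plus_part (t : nat) (A : {set {set T}}) : {set {set T}} :=
  [set X in A | [forall Y in A :\ X, t <= #|X :&: Y|]].
Definition minus_part (t : nat) (A : {set {set T}}) : {set {set T}} :=
  A :\: plus_part t A.

Definition beta_at (F : {set {set T}}) (t : nat) (A : {set {set T}}) : rat :=
  if minus_part t A != set0 then
    (((lsize F t)%:R - (#|plus_part t A|)%:R) / (#|minus_part t A|)%:R)%R
  else ((lsize F t)%:R / (#|F|)%:R)%R.

(* minimum over all A subset of F (powerset F is nonempty, contains set0) *)
Definition beta (F : {set {set T}}) (t : nat) : rat :=
  \big[Order.min/beta_at F t set0]_(A in powerset F) beta_at F t A.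

Definition kappa (F : {set {set T}}) (t : nat) : rat := ((beta F t)^-1)%R.
End Defs.

From mathcomp Require Import all_boot all_order all_algebra.
From mathcomp Require Import lra.
Import Order.TTheory GRing.Theory Num.Theory.
Set Implicit Arguments. Unset Strict Implicit.

(* If [A^{t,-}] is nonempty, every member of [A^{t,+}] t-intersects every
   member of [A], itself included, so the k-tuple [(A, A^{t,+}, ..., A^{t,+})]
   is cross-t-intersecting and its total size [|A| + (k-1)|A^{t,+}|] is
   bounded by the maximum.  For the star [(F, ∅, ..., ∅)] this maximum is [|F|],
   and [A = F] forces [F^{t,+} = ∅].  For [(L, ..., L)] it is [k l(F,t)], and
   the bound rearranges to [|A^{t,-}| <= k (l(F,t) - |A^{t,+}|)] for every
   [A ⊆ F], i.e. [β(F,t) >= 1/k], i.e. [κ(F,t) <= k]. *)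

Section PlusPart.
Variables (T : finType) (t : nat).
Implicit Types (A : {set {set T}}) (X Y : {set T}).

Lemma plus_part_sub A : plus_part t A \subset A.
Proof. by apply/subsetP => X; rewrite inE => /andP[]. Qed.

Lemma card_plus_minus A : #|A| = #|plus_part t A| + #|minus_part t A|.
Proof. by rewrite -(cardsID (plus_part t A) A) (setIidPr (plus_part_sub A)). Qed.

Lemma plus_part_meet_neq A X Y :
  X \in plus_part t A -> Y \in A -> X != Y -> t <= #|X :&: Y|.
Proof.
rewrite inE => /andP[_ /forallP XA] YA neXY.
by move/implyP: (XA Y); apply; rewrite !inE eq_sym neXY.
Qed.

(* The case [Y = X] is where [A^{t,-} != set0] is needed: [X] meets some other
   member in at least [t] elements, so [t <= |X|]. *)
Lemma plus_part_meet A X Y : minus_part t A != set0 ->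
  X \in plus_part t A -> Y \in A -> t <= #|X :&: Y|.
Proof.
case/set0Pn=> Z; rewrite inE => /andP[ZnP ZA] XP YA.
have [<-|neXY] := eqVneq X Y; last exact: plus_part_meet_neq XP YA neXY.
have neXZ : X != Z by apply: contraNneq ZnP => <-.
rewrite setIid; apply: leq_trans (plus_part_meet_neq XP ZA neXZ) _.
exact/subset_leq_card/subsetIl.
Qed.

Definition plus_tuple k (i0 : 'I_k) A : 'I_k -> {set {set T}} :=
  fun j => if j == i0 then A else plus_part t A.

Lemma plus_tuple_cross k (i0 : 'I_k) A :
  minus_part t A != set0 -> cross_t_intersecting t (plus_tuple i0 A).
Proof.
move=> Am i j neij X Y; rewrite /plus_tuple /=.
have [Ei | _] := eqVneq i i0; have [Ej | _] := eqVneq j i0.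
- by rewrite Ei Ej eqxx in neij.
- by move=> XA YP; rewrite setIC; exact: plus_part_meet YP XA.
- by move=> XP YA; exact: plus_part_meet XP YA.
- by move=> XP YP; exact: plus_part_meet XP (subsetP (plus_part_sub A) _ YP).
Qed.

Lemma sum_plus_tuple k (i0 : 'I_k) A :
  \sum_(j < k) #|plus_tuple i0 A j| = #|A| + k.-1 * #|plus_part t A|.
Proof.
rewrite (bigD1 i0) //= /plus_tuple eqxx.
rewrite (eq_bigr (fun=> #|plus_part t A|)); last by move=> j /negbTE ->.
by rewrite sum_nat_const cardC1 card_ord.
Qed.

End PlusPart.

Section KappaBound.
Variables (T : finType) (t : nat) (F : {set {set T}}) (k : nat).
Hypothesis k_gt0 : 0 < k.
Implicit Types (A : {set {set T}}).
Local Notation l := (lsize F t).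

Lemma inv_le_beta_at_minus A :
  minus_part t A != set0 ->
  #|A| + k.-1 * #|plus_part t A| <= k * l ->
  ((k%:R : rat)^-1 <= beta_at F t A)%R.
Proof.
rewrite /beta_at => Am; rewrite Am (card_plus_minus t).
have : 0 < #|minus_part t A| by rewrite card_gt0.
move: #|minus_part t A| #|plus_part t A| => m p m_gt0 le_sum.
have le_mkp : (m%:R + k%:R * p%:R <= k%:R * l%:R :> rat)%R.
  rewrite -!natrM -natrD ler_nat; apply: leq_trans le_sum.
  by rewrite -{1}(prednK k_gt0) mulSn addnCA addnA.
have m_pos : (0 < m%:R :> rat)%R by rewrite ltr0n.
have k_pos : (0 < k%:R :> rat)%R by rewrite ltr0n.
rewrite ler_pdivlMr // mulrC ler_pdivrMr //; lra.
Qed.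

Lemma inv_le_beta_at_plus A :
  minus_part t A = set0 -> 0 < #|F| -> #|F| <= k * l ->
  ((k%:R : rat)^-1 <= beta_at F t A)%R.
Proof.
rewrite /beta_at => -> F_gt0 le_Fkl; rewrite eqxx /=.
have le_Fkl_rat : (#|F|%:R <= k%:R * l%:R :> rat)%R by rewrite -natrM ler_nat.
have F_pos : (0 < #|F|%:R :> rat)%R by rewrite ltr0n.
have k_pos : (0 < k%:R :> rat)%R by rewrite ltr0n.
rewrite ler_pdivlMr // mulrC ler_pdivrMr //; lra.
Qed.

Lemma kappa_le_of_plus_tuples :
  minus_part t F != set0 ->
  (forall A, A \subset F -> minus_part t A != set0 ->
     #|A| + k.-1 * #|plus_part t A| <= k * l) ->
  (kappa F t <= k%:R)%R.
Proof.
move=> Fm le_tuple.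
have F_gt0 : 0 < #|F|.
  by case/set0Pn: Fm => X; rewrite inE card_gt0 => /andP[_ XF]; apply/set0Pn; exists X.
have le_Fkl : #|F| <= k * l by apply: leq_trans (le_tuple F (subxx F) Fm); apply: leq_addr.
have le_beta_at A : A \in powerset F -> ((k%:R : rat)^-1 <= beta_at F t A)%R.
  rewrite inE => AF; have [Am | Am] := eqVneq (minus_part t A) set0.
    exact: inv_le_beta_at_plus.
  exact: inv_le_beta_at_minus (le_tuple A AF Am).
have le_beta : ((k%:R : rat)^-1 <= beta F t)%R.
  rewrite /beta; elim/big_rec: _ => [|A b AF le_b]; last by rewrite le_min le_beta_at.
  by apply: le_beta_at; rewrite inE sub0set.
have kinv_pos : (0 < (k%:R : rat)^-1)%R by rewrite invr_gt0 ltr0n.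
rewrite /kappa -[X in (_ <= X)%R]invrK lef_pV2 ?posrE //.
exact: lt_le_trans le_beta.
Qed.

End KappaBound.

Section MaximalTuples.
Variables (T : finType) (t : nat) (F : {set {set T}}) (k : nat).
Variable As : 'I_k -> {set {set T}}.
Hypothesis As_max : forall Bs : 'I_k -> {set {set T}},
  (forall i, Bs i \subset F) -> cross_t_intersecting t Bs ->
  \sum_(i < k) #|Bs i| <= \sum_(i < k) #|As i|.

Lemma plus_tuple_le_max (A : {set {set T}}) :
  0 < k -> A \subset F -> minus_part t A != set0 ->
  #|A| + k.-1 * #|plus_part t A| <= \sum_(i < k) #|As i|.
Proof.
move=> k_gt0 AF Am; rewrite -(sum_plus_tuple t (Ordinal k_gt0) A).
apply: As_max; last exact: plus_tuple_cross.
move=> j; rewrite /plus_tuple; case: ifP => // _.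
exact: subset_trans (plus_part_sub t A) AF.
Qed.

End MaximalTuples.

Theorem proposition4p5 (T : finType) (t : nat) (F : {set {set T}}) (k : nat)
  (As : 'I_k -> {set {set T}}) :
  1 <= t ->
  t <= alpha F ->
  plus_part t F != set0 ->
  minus_part t F != set0 ->
  2 <= k ->
  ((k%:R : rat) < kappa F t)%R ->
  (forall i, As i \subset F) ->
  cross_t_intersecting t As ->
  (forall Bs : 'I_k -> {set {set T}},
     (forall i, Bs i \subset F) -> cross_t_intersecting t Bs ->
     \sum_(i < k) #|Bs i| <= \sum_(i < k) #|As i|) ->
  ~ (exists i : 'I_k, As i = F /\ (forall j : 'I_k, j != i -> As j = set0)) /\
  ~ (exists L : {set {set T}},
       [/\ L \subset F, t_intersecting t L, #|L| = lsize F t &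
           forall i : 'I_k, As i = L]).
Proof.
move=> _ _ Fp Fm k_ge2 lt_kappa _ _ As_max.
have k_gt0 : 0 < k by apply: leq_trans k_ge2.
have le_max := plus_tuple_le_max As_max k_gt0.
split.
- case=> i [Ai Aj].
  have sumF : \sum_(j < k) #|As j| = #|F|.
    by rewrite (bigD1 i) //= Ai big1 ?addn0 // => j /Aj ->; apply: cards0.
  have := le_max F (subxx F) Fm.
  rewrite sumF -[X in _ <= X]addn0 leq_add2l leqn0 muln_eq0 cards_eq0 (negbTE Fp) orbF.
  by move/eqP=> k1; rewrite -(prednK k_gt0) k1 in k_ge2.
- case=> L [_ _ cardL AsL].
  have sumL : \sum_(j < k) #|As j| = k * lsize F t.
    by under eq_bigr do rewrite AsL; rewrite sum_nat_const card_ord cardL.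
  rewrite sumL in le_max.
  by have := lt_le_trans lt_kappa (kappa_le_of_plus_tuples k_gt0 Fm le_max); rewrite ltxx.
Qed.
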